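(* Let $$d=s^6-(3+3i)s^5+3is^4+(4-4i)s^3+3s^2+(3+3i)s+i,\qquad d'=s^6-(3-3i)s^5-3is^4+(4+4i)s^3+3s^2+(3-3i)s-i$$ (so $d'(s)=\overline{d(\overline s)}$), and $$y=-\frac{(1+i)(s^2-1)(s^2+2is+1)(s^2-2is+1)^2\,d'}{8s(s^2+i)(s^2-i)^2\,d},\qquad t=\frac{(s^2-1)^2(s^4+6s^2+1)^3}{32s^2(s^4+1)^3}.$$ Then $y(t)$ is a solution of $\mathrm{P}_{\mathrm{VI}}$ with parameters $(\theta_1,\theta_2,\theta_3,\theta_4)=(3/8,3/8,3/8,5/8)$.
   Context: $\mathrm{P}_{\mathrm{VI}}$ is the equation $$\frac{d^2y}{dt^2}=\frac12\Big(\frac1y+\frac1{y-1}+\frac1{y-t}\Big)\Big(\frac{dy}{dt}\Big)^2-\Big(\frac1t+\frac1{t-1}+\frac1{y-t}\Big)\frac{dy}{dt}+\frac{y(y-1)(y-t)}{t^2(t-1)^2}\Big(\alpha+\beta\frac{t}{y^2}+\gamma\frac{t-1}{(y-1)^2}+\delta\frac{t(t-1)}{(y-t)^2}\Big),$$ with $\alpha=(\theta_4-1)^2/2$, $\beta=-\theta_1^2/2$, $\gamma=\theta_3^2/2$, $\delta=(1-\theta_2^2)/2$. When $y,t$ are given as rational functions of a parameter on a curve, derivatives with respect to $t$ are computed via the chain rule. Here $i=\sqrt{-1}$. *)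

From HB Require Import structures.
From mathcomp Require Import all_boot all_order all_algebra all_field.
Set Implicit Arguments. Unset Strict Implicit. Unset Printing Implicit Defensive.
Import Order.TTheory GRing.Theory Num.Theory.
Local Open Scope ring_scope.

(* A rational function of the parameter s, represented as numerator/denominator. *)
Definition ratfn := ({poly algC} * {poly algC})%type.

Definition reval (f : ratfn) (s : algC) : algC := f.1.[s] / f.2.[s].
Definition rdefined (f : ratfn) (s : algC) : bool := f.2.[s] != 0.

Definition rderiv (f : ratfn) : ratfn :=
  (f.1^`() * f.2 - f.1 * f.2^`(), f.2 * f.2).
Definition rdiv (f g : ratfn) : ratfn := (f.1 * g.2, f.2 * g.1).

(* chain rule: d/dt of f, where t = t(s) *)
Definition ddt (t f : ratfn) : ratfn := rdiv (rderiv f) (rderiv t).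

(* Painleve VI equation at a point, with y' = dy/dt = y1, y'' = y2 *)
Definition PVI (th1 th2 th3 th4 : algC) (t y y1 y2 : algC) : Prop :=
  let alpha := (th4 - 1) ^+ 2 / 2 in
  let beta := - th1 ^+ 2 / 2 in
  let gamma := th3 ^+ 2 / 2 in
  let delta := (1 - th2 ^+ 2) / 2 in
  y2 = 2^-1 * (y^-1 + (y - 1)^-1 + (y - t)^-1) * y1 ^+ 2
       - (t^-1 + (t - 1)^-1 + (y - t)^-1) * y1
       + y * (y - 1) * (y - t) / (t ^+ 2 * (t - 1) ^+ 2)
         * (alpha + beta * t / y ^+ 2 + gamma * (t - 1) / (y - 1) ^+ 2
            + delta * t * (t - 1) / (y - t) ^+ 2).

Definition d_pol : {poly algC} :=
  'X^6 - (3 + 3 * 'i) *: 'X^5 + (3 * 'i) *: 'X^4 + (4 - 4 * 'i) *: 'X^3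
  + 3 *: 'X^2 + (3 + 3 * 'i) *: 'X + ('i)%:P.
Definition d'_pol : {poly algC} :=
  'X^6 - (3 - 3 * 'i) *: 'X^5 - (3 * 'i) *: 'X^4 + (4 + 4 * 'i) *: 'X^3
  + 3 *: 'X^2 + (3 - 3 * 'i) *: 'X - ('i)%:P.

Definition y_fn : ratfn :=
  ( - ((1 + 'i) *: (('X^2 - 1) * ('X^2 + (2 * 'i) *: 'X + 1)
        * ('X^2 - (2 * 'i) *: 'X + 1) ^+ 2 * d'_pol)),
    8 *: ('X * ('X^2 + ('i)%:P) * ('X^2 - ('i)%:P) ^+ 2 * d_pol) ).

Definition t_fn : ratfn :=
  ( ('X^2 - 1) ^+ 2 * ('X^4 + 6 *: 'X^2 + 1) ^+ 3,
    32 *: ('X^2 * ('X^4 + 1) ^+ 3) ).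

From mathcomp Require Import all_boot all_order all_algebra all_field.
From Stdlib Require Import ZArith.
From mathcomp.zify Require Import ssrZ.
From mathcomp Require Import ring.
Set Implicit Arguments.
Unset Strict Implicit.
Unset Printing Implicit Defensive.
Import GRing.Theory Num.Theory.
Local Open Scope ring_scope.

(* Write y = u/w and t = p/q with polynomials u, w, p, q in s.  By the chain
   rule dy/dt and d^2y/dt^2 are rational in the values and s-derivatives of
   u, w, p, q, so once P_VI is multiplied by its denominator (nonzero off the
   excluded points) it becomes the vanishing of one polynomial in s with
   coefficients in Z[i].  Writing that polynomial once over abstract ring
   operations lets us evaluate it exactly on coefficient lists inside the
   kernel, where it comes out identically zero. *)

Declare Scope ops_scope.

Section ClearedNumerator.
Variables (T : Type) (add mul : T -> T -> T) (opp : T -> T) (const : Z -> T).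

Local Notation "x + y" := (add x y) : ops_scope.
Local Notation "x - y" := (add x (opp y)) : ops_scope.
Local Notation "x * y" := (mul x y) : ops_scope.
Local Notation "# n" := (const n%Z) (at level 0, n at level 0, format "# n") : ops_scope.
Local Open Scope ops_scope.

(* Numerator of y'' minus the right-hand side of P_VI at
   theta = (3/8, 3/8, 3/8, 5/8), for y = u/w, t = p/q, where w', q' are
   s-derivatives, dy/ds = a/w^2, dt/ds = b/q^2, a' = da/ds, b' = db/ds.
   The coefficients 9, -9, 9, 55 in [pot] are 128 (alpha, beta, gamma, delta). *)
Definition pvi_numerator (u w p q w' q' a b a' b' : T) : T :=
  let y1 := u - w in
  let yt := u * q - p * w in
  let t1 := p - q in
  let d2y := (a' * w - #2 * a * w') * b * q - a * (b' * q - #2 * b * q') * w in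
  let cy := y1 * yt + u * yt + q * u * y1 in
  let ct := t1 * yt + p * yt + w * p * t1 in
  let pot := #9 * q * u * u * y1 * y1 * yt * yt - #9 * p * w * w * y1 * y1 * yt * yt
    + #9 * t1 * w * w * u * u * yt * yt + #55 * p * t1 * w * w * q * u * u * y1 * y1 in
  #128 * (#2 * q * p * p * t1 * t1 * u * y1 * yt * d2y
          - cy * a * a * b * q * q * p * p * t1 * t1
          + #2 * ct * a * b * b * w * q * p * t1 * u * y1)
  - #2 * pot * b * b * b.

Variable der : T -> T.

Definition pvi_numerator_of (u w p q : T) : T :=
  let wr f g := der f * g - f * der g in
  pvi_numerator u w p q (der w) (der q) (wr u w) (wr p q)
    (der (wr u w)) (der (wr p q)).

End ClearedNumerator.

Section NumeratorMap.
Variables (T S : Type) (addT mulT : T -> T -> T) (oppT : T -> T) (constT : Z -> T).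
Variables (addS mulS : S -> S -> S) (oppS : S -> S) (constS : Z -> S).
Variable phi : T -> S.
Hypothesis phiD : {morph phi : x y / addT x y >-> addS x y}.
Hypothesis phiM : {morph phi : x y / mulT x y >-> mulS x y}.
Hypothesis phiN : {morph phi : x / oppT x >-> oppS x}.
Hypothesis phiC : forall n, phi (constT n) = constS n.

Lemma pvi_numerator_map u w p q w' q' a b a' b' :
  phi (pvi_numerator addT mulT oppT constT u w p q w' q' a b a' b')
  = pvi_numerator addS mulS oppS constS (phi u) (phi w) (phi p) (phi q)
      (phi w') (phi q') (phi a) (phi b) (phi a') (phi b').
Proof. by rewrite /pvi_numerator; cbv zeta; rewrite !(phiD, phiM, phiN, phiC). Qed.

Variables (derT : T -> T) (derS : S -> S).
Hypothesis phi_der : {morph phi : x / derT x >-> derS x}.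

Lemma pvi_numerator_of_map u w p q :
  phi (pvi_numerator_of addT mulT oppT constT derT u w p q)
  = pvi_numerator_of addS mulS oppS constS derS (phi u) (phi w) (phi p) (phi q).
Proof. by rewrite /pvi_numerator_of pvi_numerator_map !(phiD, phiM, phiN, phi_der). Qed.

End NumeratorMap.

Definition intZ (R : pzRingType) (n : Z) : R := (int_of_Z n)%:~R.

Lemma intZ0 R : intZ R 0 = 0. Proof. by []. Qed.
Lemma intZD R : {morph intZ R : m n / (m + n)%Z >-> m + n}.
Proof. by move=> m n; rewrite /intZ rmorphD intrD. Qed.
Lemma intZN R : {morph intZ R : n / (- n)%Z >-> - n}.
Proof. by move=> n; rewrite /intZ rmorphN intrN. Qed.
Lemma intZM R : {morph intZ R : m n / (m * n)%Z >-> m * n}.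
Proof. by move=> m n; rewrite /intZ rmorphM intrM. Qed.
Lemma intZB R : {morph intZ R : m n / (m - n)%Z >-> m - n}.
Proof. by move=> m n; rewrite /intZ -intrB -(raddfB int_of_Z). Qed.

Lemma PVI_from_numerator (u w p q w' q' a b a' b' : algC) :
  w != 0 -> q != 0 -> b != 0 ->
  p / q != 0 -> p / q != 1 -> u / w != 0 -> u / w != 1 -> u / w != p / q ->
  pvi_numerator +%R *%R -%R (intZ _) u w p q w' q' a b a' b' = 0 ->
  PVI (3 / 8) (3 / 8) (3 / 8) (5 / 8) (p / q) (u / w) ((a / w ^+ 2) / (b / q ^+ 2))
    ((((a' * w - 2 * a * w') / w ^+ 3) * (b / q ^+ 2)
      - (a / w ^+ 2) * ((b' * q - 2 * b * q') / q ^+ 3)) / (b / q ^+ 2) ^+ 3).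
Proof.
move=> w0 q0 b0 t0 t1 y0 y1 yt num0.
have p0 : p != 0 by apply: contraNneq t0 => ->; rewrite mul0r.
have u0 : u != 0 by apply: contraNneq y0 => ->; rewrite mul0r.
have pq : p - q != 0 by rewrite subr_eq0; apply: contraNneq t1 => ->; rewrite divff.
have uw : u - w != 0 by rewrite subr_eq0; apply: contraNneq y1 => ->; rewrite divff.
have uqpw : u * q - p * w != 0 by rewrite subr_eq0 -eqr_div.
apply/eqP; rewrite /PVI -subr_eq0; apply/eqP.
pose den := 256 * w ^+ 3 * p ^+ 2 * (p - q) ^+ 2 * u * (u - w) * (u * q - p * w) * b ^+ 3.
transitivity (pvi_numerator +%R *%R -%R (intZ _) u w p q w' q' a b a' b' * q ^+ 2 / den).
  rewrite /den /pvi_numerator /intZ; cbv zeta.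
  by field; rewrite b0 uqpw uw u0 pq p0 w0 q0.
by rewrite num0 !mul0r.
Qed.

(* No side condition: [invfM] holds in a field even when a factor is 0. *)
Lemma reval_rdiv f g s : reval (rdiv f g) s = reval f s / reval g s.
Proof. by rewrite /reval /= !hornerM invf_div invfM; ring. Qed.

Lemma reval_rderiv f s :
  reval (rderiv f) s = (rderiv f).1.[s] / f.2.[s] ^+ 2.
Proof. by rewrite /reval /= hornerM expr2. Qed.

Lemma reval_rderiv2 f s : f.2.[s] != 0 ->
  reval (rderiv (rderiv f)) s
  = ((rderiv f).1^`().[s] * f.2.[s] - 2 * (rderiv f).1.[s] * f.2^`().[s]) / f.2.[s] ^+ 3.
Proof.
move=> f2s; rewrite /reval [in LHS]/rderiv /= derivM !(hornerM, hornerD, hornerN).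
by field.
Qed.

Lemma reval_rderiv_rdiv f g s :
  f.2.[s] != 0 -> g.1.[s] != 0 -> g.2.[s] != 0 ->
  reval (rderiv (rdiv f g)) s
  = (reval (rderiv f) s * reval g s - reval f s * reval (rderiv g) s) / reval g s ^+ 2.
Proof.
move=> f2s g1s g2s; rewrite /reval /rderiv /rdiv /= !derivM !(hornerM, hornerD, hornerN).
by field; rewrite f2s g1s g2s.
Qed.

Lemma reval_ddt2 t y s :
  y.2.[s] != 0 -> t.2.[s] != 0 -> (rderiv t).1.[s] != 0 ->
  reval (ddt t (ddt t y)) s
  = (reval (rderiv (rderiv y)) s * reval (rderiv t) s
     - reval (rderiv y) s * reval (rderiv (rderiv t)) s) / reval (rderiv t) s ^+ 3.
Proof.
move=> y2s t2s dts; rewrite [LHS]reval_rdiv reval_rderiv_rdiv ?hornerM ?mulf_neq0 //.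
by rewrite -mulrA -invfM -exprSr.
Qed.

Lemma PVI_from_rat_numerator (y t : ratfn) (s : algC) :
  pvi_numerator_of +%R *%R -%R (intZ _) deriv y.1 y.2 t.1 t.2 = 0 ->
  rdefined y s -> rdefined t s -> rdefined (ddt t y) s ->
  reval t s != 0 -> reval t s != 1 ->
  reval y s != 0 -> reval y s != 1 -> reval y s != reval t s ->
  PVI (3 / 8) (3 / 8) (3 / 8) (5 / 8) (reval t s) (reval y s)
      (reval (ddt t y) s) (reval (ddt t (ddt t y)) s).
Proof.
move=> num0 y2s t2s yts t0 t1 y0 y1 yt.
have dt0 : (rderiv t).1.[s] != 0.
  by move: yts; rewrite /rdefined /= hornerM mulf_eq0 negb_or => /andP[].
have horner_intZ n : (intZ _ n : {poly algC}).[s] = intZ _ n.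
  by rewrite /intZ -(rmorph_int (@polyC _)) hornerC.
have := congr1 (horner^~ s) num0.
rewrite horner0 /pvi_numerator_of (pvi_numerator_map
  (fun p q : {poly algC} => hornerD p q s) (fun p q : {poly algC} => hornerM p q s)
  (fun p : {poly algC} => hornerN p s) horner_intZ) => eval_num.
rewrite reval_ddt2 // [reval (ddt _ _) _]reval_rdiv !reval_rderiv2 // !reval_rderiv.
exact: PVI_from_numerator.
Qed.

Definition gint := (Z * Z)%type.
Definition gintC (z : gint) : algC := intZ _ z.1 + intZ _ z.2 * 'i.
Definition gint_add (x y : gint) : gint := (x.1 + y.1, x.2 + y.2)%Z.
Definition gint_opp (x : gint) : gint := (- x.1, - x.2)%Z.
Definition gint_mul (x y : gint) : gint :=
  (x.1 * y.1 - x.2 * y.2, x.1 * y.2 + x.2 * y.1)%Z.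

Lemma gintC0 : gintC (0, 0)%Z = 0.
Proof. by rewrite /gintC /= intZ0 mul0r addr0. Qed.
Lemma gintCD : {morph gintC : x y / gint_add x y >-> x + y}.
Proof. by move=> x y; rewrite /gintC !intZD; ring. Qed.
Lemma gintCN : {morph gintC : x / gint_opp x >-> - x}.
Proof. by move=> x; rewrite /gintC !intZN; ring. Qed.
Lemma gintCM : {morph gintC : x y / gint_mul x y >-> x * y}.
Proof.
move=> [a b] [c d]; rewrite /gintC /= intZD intZB !intZM.
by ring: (sqrCi algC).
Qed.

(* Polynomials over Z[i] as coefficient lists, constant term first. *)
Definition gpoly := seq gint.

Definition gpolyC (l : gpoly) : {poly algC} := Poly (map gintC l).

Fixpoint gpoly_add (l1 l2 : gpoly) : gpoly :=
  match l1, l2 with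
  | [::], _ => l2
  | _, [::] => l1
  | c1 :: l1', c2 :: l2' => gint_add c1 c2 :: gpoly_add l1' l2'
  end.
Definition gpoly_opp (l : gpoly) : gpoly := map gint_opp l.
Definition gpoly_scale (c : gint) (l : gpoly) : gpoly := map (gint_mul c) l.
Fixpoint gpoly_mul (l1 l2 : gpoly) : gpoly :=
  if l1 is c :: l1' then gpoly_add (gpoly_scale c l2) ((0, 0)%Z :: gpoly_mul l1' l2)
  else [::].
Definition gpoly_const (n : Z) : gpoly := [:: (n, 0%Z)].
Fixpoint gpoly_deriv (l : gpoly) : gpoly :=
  if l is _ :: l' then gpoly_add l' ((0, 0)%Z :: gpoly_deriv l') else [::].

Lemma gpolyC_nil : gpolyC [::] = 0. Proof. by []. Qed.
Lemma gpolyC_cons c l : gpolyC (c :: l) = gpolyC l * 'X + (gintC c)%:P.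
Proof. by rewrite /gpolyC /= cons_poly_def. Qed.
Lemma gpolyC_shift l : gpolyC ((0, 0)%Z :: l) = gpolyC l * 'X.
Proof. by rewrite gpolyC_cons gintC0 addr0. Qed.

Lemma gpolyCD : {morph gpolyC : l1 l2 / gpoly_add l1 l2 >-> l1 + l2}.
Proof.
elim=> [|c1 l1 IH] [|c2 l2] /=; rewrite ?gpolyC_nil ?add0r ?addr0 //.
by rewrite !gpolyC_cons IH gintCD polyCD mulrDl addrACA.
Qed.
Lemma gpolyCN : {morph gpolyC : l / gpoly_opp l >-> - l}.
Proof.
elim=> [|c l IH]; first by rewrite /= oppr0.
by rewrite /= !gpolyC_cons IH gintCN polyCN opprD mulNr.
Qed.
Lemma gpolyC_scale c l : gpolyC (gpoly_scale c l) = (gintC c)%:P * gpolyC l.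
Proof.
elim: l => [|c' l IH]; first by rewrite /= mulr0.
by rewrite /= !gpolyC_cons IH gintCM polyCM mulrDr mulrA.
Qed.
Lemma gpolyCM : {morph gpolyC : l1 l2 / gpoly_mul l1 l2 >-> l1 * l2}.
Proof.
elim=> [|c l1 IH] l2; first by rewrite /= mul0r.
by rewrite /= gpolyCD gpolyC_scale gpolyC_shift IH gpolyC_cons; ring.
Qed.
Lemma gpolyC_const n : gpolyC (gpoly_const n) = intZ _ n.
Proof.
by rewrite gpolyC_cons gpolyC_nil mul0r add0r /gintC intZ0 mul0r addr0 /intZ rmorph_int.
Qed.
Lemma gpolyC_deriv : {morph gpolyC : l / gpoly_deriv l >-> l^`()}.
Proof.
elim=> [|c l IH]; first by rewrite /= deriv0.
by rewrite /= gpolyCD gpolyC_shift IH gpolyC_cons derivMXaddC.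
Qed.
Lemma gpolyC_eq0 l : all (fun c => (c.1 =? 0)%Z && (c.2 =? 0)%Z) l -> gpolyC l = 0.
Proof.
elim: l => [|[a b] l IH] //= /andP[/andP[/Z.eqb_spec -> /Z.eqb_spec ->] /IH l0].
by rewrite gpolyC_shift l0 mul0r.
Qed.

Lemma eq_poly_horner (R : numDomainType) (p q : {poly R}) :
  (forall x, p.[x] = q.[x]) -> p = q.
Proof.
move=> eq_pq; apply/eqP; rewrite -subr_eq0; apply/eqP.
apply: (@roots_geq_poly_eq0 _ _ [seq i%:R | i <- iota 0 (size (p - q))]).
- by apply/allP => _ /mapP[i _ ->]; rewrite /root !hornerE eq_pq subrr.
- by rewrite map_inj_uniq ?iota_uniq // => i j /eqP; rewrite eqr_nat => /eqP.
- by rewrite size_map size_iota.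
Qed.

Local Infix "*g" := gpoly_mul (at level 40, left associativity).

Definition d_gpoly : gpoly :=
  [:: (0, 1); (3, 3); (3, 0); (4, -4); (0, 3); (-3, -3); (1, 0)]%Z.
Definition d'_gpoly : gpoly :=
  [:: (0, -1); (3, -3); (3, 0); (4, 4); (0, -3); (-3, 3); (1, 0)]%Z.

Definition y_num : gpoly :=
  gpoly_opp ([:: (1, 1)]%Z *g [:: (-1, 0); (0, 0); (1, 0)]%Z
    *g [:: (1, 0); (0, 2); (1, 0)]%Z
    *g [:: (1, 0); (0, -2); (1, 0)]%Z *g [:: (1, 0); (0, -2); (1, 0)]%Z
    *g d'_gpoly).
Definition y_den : gpoly :=
  gpoly_const 8 *g [:: (0, 0); (1, 0)]%Z *g [:: (0, 1); (0, 0); (1, 0)]%Z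
    *g [:: (0, -1); (0, 0); (1, 0)]%Z *g [:: (0, -1); (0, 0); (1, 0)]%Z
    *g d_gpoly.

Definition t_num : gpoly :=
  let s2m1 := [:: (-1, 0); (0, 0); (1, 0)]%Z in
  let s4p6s2p1 := [:: (1, 0); (0, 0); (6, 0); (0, 0); (1, 0)]%Z in
  s2m1 *g s2m1 *g s4p6s2p1 *g s4p6s2p1 *g s4p6s2p1.
Definition t_den : gpoly :=
  let s4p1 := [:: (1, 0); (0, 0); (0, 0); (0, 0); (1, 0)]%Z in
  gpoly_const 32 *g [:: (0, 0); (0, 0); (1, 0)]%Z *g s4p1 *g s4p1 *g s4p1.

Lemma y_fn_gpoly : y_fn = (gpolyC y_num, gpolyC y_den).
Proof.
rewrite /y_fn /y_num /y_den /d_pol /d'_pol /d_gpoly /d'_gpoly.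
congr pair; apply: eq_poly_horner => x;
  rewrite ?gpolyCN !gpolyCM ?gpolyC_const !gpolyC_cons gpolyC_nil !hornerE /gintC /=;
  by rewrite /intZ; ring: (sqrCi algC).
Qed.

Lemma t_fn_gpoly : t_fn = (gpolyC t_num, gpolyC t_den).
Proof.
rewrite /t_fn /t_num /t_den.
congr pair; apply: eq_poly_horner => x;
  rewrite !gpolyCM ?gpolyC_const !gpolyC_cons gpolyC_nil !hornerE /gintC /=;
  by rewrite /intZ; ring.
Qed.

Theorem mainTheorem13 (s : algC) :
  rdefined y_fn s -> rdefined t_fn s ->
  rdefined (ddt t_fn y_fn) s -> rdefined (ddt t_fn (ddt t_fn y_fn)) s ->
  reval t_fn s != 0 -> reval t_fn s != 1 ->
  reval y_fn s != 0 -> reval y_fn s != 1 -> reval y_fn s != reval t_fn s ->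
  PVI (3 / 8) (3 / 8) (3 / 8) (5 / 8)
      (reval t_fn s) (reval y_fn s)
      (reval (ddt t_fn y_fn) s) (reval (ddt t_fn (ddt t_fn y_fn)) s).
Proof.
(* definedness of d^2y/dt^2 is implied by that of y, t and dy/dt *)
move=> y_def t_def yt_def _; apply: PVI_from_rat_numerator => //.
rewrite y_fn_gpoly t_fn_gpoly.
rewrite -(pvi_numerator_of_map gpolyCD gpolyCM gpolyCN gpolyC_const gpolyC_deriv).
by apply: gpolyC_eq0; vm_compute.
Qed.
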